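(* Let $(W,S,A,\alpha,\beta,R)$ be a POMDP, $\gamma\in(0,1)$ a discount factor and $\mu\in\Delta_W$ a start distribution. Then there is a stationary policy $\pi^\ast\in\Delta_{S,A}$ that is deterministic on each $s\in S$ with $|\operatorname{supp}(\beta(s|\cdot))|\le1$ (i.e. $\pi^\ast(\cdot|s)$ is a point mass for each such $s$) and satisfies $\mathcal{R}^\gamma_\mu(\pi^\ast)\ge\mathcal{R}^\gamma_\mu(\pi)$ for all $\pi\in\Delta_{S,A}$.
   Context: A POMDP is a tuple $(W,S,A,\alpha,\beta,R)$ with $W,S,A$ finite sets, $\beta(s|w)$ a Markov kernel from $W$ to $S$, $\alpha(w'|w,a)$ a Markov kernel from $W\times A$ to $W$, and $R\colon W\times A\to\mathbb{R}$. A stationary policy is a Markov kernel $\pi(a|s)$ from $S$ to $A$; $\Delta_{S,A}$ is the set of these. Running $\pi$ means: $w_0\sim\mu$, and at each time $t$ a sensor state $s_t\sim\beta(\cdot|w_t)$ is observed, an action $a_t\sim\pi(\cdot|s_t)$ is chosen, and $w_{t+1}\sim\alpha(\cdot|w_t,a_t)$. The discounted expected reward is $\mathcal{R}^\gamma_\mu(\pi)=\lim_{T\to\infty}\mathbb{E}\big[\sum_{t=0}^{T-1}\gamma^tR(w_t,a_t)\big]$ under this process. $\operatorname{supp}(\beta(s|\cdot))=\{w\colon\beta(s|w)>0\}$. *)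

From HB Require Import structures.
From mathcomp Require Import all_boot all_order all_algebra.
From mathcomp Require Import all_classical all_reals all_analysis.
Set Implicit Arguments. Unset Strict Implicit. Unset Printing Implicit Defensive.
Import Order.TTheory GRing.Theory Num.Theory.
Import numFieldNormedType.Exports.
Local Open Scope ring_scope.

Section POMDP.
Variable R : realType.

(* k : X -> Y -> R is a Markov kernel from X to Y; k x y = k(y|x). *)
Definition is_kernel (X Y : finType) (k : X -> Y -> R) : Prop :=
  (forall x y, 0 <= k x y) /\ (forall x, \sum_(y : Y) k x y = 1).

Definition is_dist (X : finType) (p : X -> R) : Prop :=
  (forall x, 0 <= p x) /\ \sum_(x : X) p x = 1.

Variables (W S A : finType).
Variables (alpha : (W * A)%type -> W -> R) (beta : W -> S -> R)
          (rew : W -> A -> R) (gamma : R) (mu : W -> R).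

(* Probability, under policy pi and start distribution mu, of the finite
   trajectory w_0 s_0 a_0 w_1 s_1 a_1 ... w_{T-1} s_{T-1} a_{T-1} w_T,
   where ws : 'I_T.+1 -> W, ss : 'I_T -> S, as_ : 'I_T -> A. *)
Definition traj_prob (pi : S -> A -> R) (T : nat)
    (ws : {ffun 'I_T.+1 -> W}) (ss : {ffun 'I_T -> S}) (as_ : {ffun 'I_T -> A}) : R :=
  mu (ws ord0) *
  \prod_(t < T) (beta (ws (widen_ord (leqnSn T) t)) (ss t) * pi (ss t) (as_ t) *
                 alpha (ws (widen_ord (leqnSn T) t), as_ t) (ws (lift ord0 t))).

Definition traj_return (T : nat) (ws : {ffun 'I_T.+1 -> W}) (as_ : {ffun 'I_T -> A}) : R :=
  \sum_(t < T) gamma ^+ t * rew (ws (widen_ord (leqnSn T) t)) (as_ t).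

Definition finite_horizon_value (pi : S -> A -> R) (T : nat) : R :=
  \sum_(ws : {ffun 'I_T.+1 -> W}) \sum_(ss : {ffun 'I_T -> S}) \sum_(as_ : {ffun 'I_T -> A})
    traj_prob pi ws ss as_ * traj_return ws as_.

Definition discounted_reward (pi : S -> A -> R) : R :=
  limn (finite_horizon_value pi).

End POMDP.

(* |supp(beta(s|.))| where beta w s = beta(s|w) *)
Definition supp_size (R : realType) (W S : finType) (beta : W -> S -> R) (s : S) : nat :=
  #|[set w : W | 0 < beta w s]|.

Definition deterministic_at (R : realType) (S A : finType) (pi : S -> A -> R) (s : S) : Prop :=
  exists a : A, forall a' : A, pi s a' = (if a' == a then 1 else 0).

(* The discounted reward of a stationary policy pi is sum_w mu(w) V_pi(w), where V_pi is
   the fixed point of the gamma-contraction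
     T_pi V (w) = sum_s beta(s|w) sum_a pi(a|s) (R(w,a) + gamma sum_w' alpha(w'|w,a) V(w')).
   V_pi is Lipschitz in pi and the policies form a compact set, so an optimal policy pi0
   exists.  If beta(s|.) is supported on at most one world w_s, then observing s reveals
   w_s, and replacing pi(.|s) by a point mass at an action maximizing the Q-value of pi at
   w_s gives a policy pi' with T_pi' V_pi >= V_pi; iterating the monotone T_pi' yields
   V_pi' >= V_pi.  Doing this at every such s turns pi0 into an optimal policy that is
   deterministic there. *)

From HB Require Import structures.
From mathcomp Require Import all_boot all_order all_algebra.
From mathcomp Require Import all_classical all_reals all_analysis.
From mathcomp Require Import ring.
Import Order.TTheory GRing.Theory Num.Theory.
Import numFieldNormedType.Exports.
Set Implicit Arguments. Unset Strict Implicit. Unset Printing Implicit Defensive.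
Local Open Scope classical_set_scope.
Local Open Scope ring_scope.

Section FinfunCons.
Variables (X : finType) (n : nat).

Definition fcons (x : X) (g : {ffun 'I_n -> X}) : {ffun 'I_n.+1 -> X} :=
  [ffun i => if unlift ord0 i is Some j then g j else x].

Lemma fcons0 x g : fcons x g ord0 = x.
Proof. by rewrite ffunE unlift_none. Qed.

Lemma fconsS x g j : fcons x g (lift ord0 j) = g j.
Proof. by rewrite ffunE liftK. Qed.

Lemma sum_ffunS (V : nmodType) (F : {ffun 'I_n.+1 -> X} -> V) :
  \sum_(f : {ffun 'I_n.+1 -> X}) F f = \sum_(x : X) \sum_(g : {ffun 'I_n -> X}) F (fcons x g).
Proof.
rewrite pair_bigA /= (reindex (fun p : X * {ffun 'I_n -> X} => fcons p.1 p.2)) /=.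
  by apply: eq_bigr => -[x g].
exists (fun f : {ffun 'I_n.+1 -> X} => (f ord0, [ffun j => f (lift ord0 j)])).
  move=> [x g] _ /=; rewrite fcons0; congr pair; apply/ffunP => j.
  by rewrite ffunE fconsS.
move=> f _ /=; apply/ffunP => i; rewrite ffunE.
by case: unliftP => [j ->|->]; rewrite ?ffunE.
Qed.

End FinfunCons.

Lemma sum_ffun0 (X : finType) (V : nmodType) (F : {ffun 'I_0 -> X} -> V) g :
  \sum_(f : {ffun 'I_0 -> X}) F f = F g.
Proof. by rewrite (big_pred1 g) // => f /=; symmetry; apply/eqP/ffunP => -[]. Qed.

Lemma sum3_mulr (V : pzSemiRingType) (X Y Z : finType) (c : V) (F : X -> Y -> Z -> V) :
  \sum_x \sum_y \sum_z c * F x y z = c * \sum_x \sum_y \sum_z F x y z.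
Proof.
rewrite mulr_sumr; apply: eq_bigr => x _.
by rewrite mulr_sumr; apply: eq_bigr => y _; rewrite mulr_sumr.
Qed.

Lemma sum3_lincomb (V : pzSemiRingType) (X Y Z : finType) (c1 c2 : V)
    (F G : X -> Y -> Z -> V) :
  \sum_x \sum_y \sum_z (c1 * F x y z + c2 * G x y z) =
  c1 * (\sum_x \sum_y \sum_z F x y z) + c2 * (\sum_x \sum_y \sum_z G x y z).
Proof.
rewrite -!sum3_mulr -big_split; apply: eq_bigr => x _.
by rewrite -big_split; apply: eq_bigr => y _; rewrite -big_split.
Qed.

Lemma norm_convex_le (R : numDomainType) (X : finType) (p f : X -> R) (c : R) :
  (forall i, 0 <= p i) -> \sum_i p i = 1 -> (forall i, `|f i| <= c) ->
  `|\sum_i p i * f i| <= c.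
Proof.
move=> p_ge0 p_sum f_le; apply: le_trans (ler_norm_sum _ _ _) _.
apply: (@le_trans _ _ (\sum_i p i * c)); last by rewrite -mulr_suml p_sum mul1r.
by apply: ler_sum => i _; rewrite normrM ger0_norm // ler_wpM2l.
Qed.

Lemma avg_le_arg_max (R : realDomainType) (X : finType) (x0 : X) (p f : X -> R) :
  (forall x, 0 <= p x) -> \sum_x p x = 1 -> \sum_x p x * f x <= f [arg max_(x > x0) f x]%O.
Proof.
move=> p_ge0 p_sum; case: arg_maxP => // xm _ f_le.
apply: (@le_trans _ _ (\sum_x p x * f xm)); last by rewrite -mulr_suml p_sum mul1r.
by apply: ler_sum => x _; apply: ler_wpM2l => //; exact: f_le.
Qed.

Lemma supp_size_le1_eq (R : realType) (W S : finType) (beta : W -> S -> R) s w w' :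
  (supp_size beta s <= 1)%N -> 0 < beta w s -> 0 < beta w' s -> w = w'.
Proof. by rewrite /supp_size => /card_le1_eqP supp1 bw bw'; apply: supp1; rewrite inE. Qed.

Section GeometricRate.
Variables (R : realType) (gamma : R).
Hypotheses (gamma_ge0 : 0 <= gamma) (gamma_lt1 : gamma < 1).

Lemma exprn_mul_lt_eventually (c eps : R) :
  0 < eps -> exists N, forall n, (N <= n)%N -> gamma ^+ n * c < eps.
Proof.
move=> eps_gt0; have c1_gt0 : 0 < `|c| + 1 by rewrite ltr_wpDl.
have /cvgrPdist_lt /(_ (eps / (`|c| + 1))) [|N _ HN] : (gamma ^+ n) @[n --> \oo] --> 0.
- by apply: cvg_expr; rewrite ger0_norm.
- by rewrite divr_gt0.
exists N => n Nn; have := HN n Nn; rewrite /= sub0r normrN normrX ger0_norm //.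
rewrite ltr_pdivlMr // => lt_eps; apply: le_lt_trans lt_eps.
rewrite (le_trans (ler_norm _)) // normrM normrX ger0_norm //.
by rewrite ler_wpM2l ?exprn_ge0 // lerDl.
Qed.

Lemma le_expr_slack (x y c : R) : (forall n, x <= y + gamma ^+ n * c) -> x <= y.
Proof.
move=> le_xy; apply/ler_addgt0Pr => e e_gt0.
have [N HN] := exprn_mul_lt_eventually c e_gt0.
by apply: le_trans (le_xy N) _; rewrite lerD2l ltW // HN.
Qed.

Lemma limn_expr_rate (u : nat -> R) l K :
  (forall n, `|u n - l| <= gamma ^+ n * K) -> limn u = l.
Proof.
move=> u_rate; apply/cvg_lim => //; apply/cvgrPdist_lt => e e_gt0.
have [N HN] := exprn_mul_lt_eventually K e_gt0.
by exists N => // n /= Nn; rewrite distrC; apply: le_lt_trans (u_rate n) (HN n Nn).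
Qed.

Lemma cauchy_expr_limn (u : nat -> R) K :
  (forall n m, (n <= m)%N -> `|u m - u n| <= gamma ^+ n * K) ->
  forall n, `|u n - limn u| <= gamma ^+ n * K.
Proof.
move=> u_cauchy.
have u_cvg : cvgn u.
  apply/cauchy_cvgP/cauchy_exP => e e_gt0.
  have [N HN] := exprn_mul_lt_eventually K e_gt0.
  exists (u N), N => // n /= Nn.
  by rewrite /ball /= distrC; apply: le_lt_trans (u_cauchy N n Nn) (HN N _).
move=> n; apply/ler_addgt0Pr => e e_gt0.
have /cvgrPdist_lt /(_ e e_gt0) [N _ HN] := u_cvg.
apply: le_trans (ler_distD (u (maxn n N)) _ _) _.
rewrite distrC lerD ?u_cauchy ?leq_maxl //.
by rewrite distrC ltW // HN /= ?leq_maxr.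
Qed.

End GeometricRate.

Lemma point_mass_kernel (R : realType) (X Y : finType) (y0 : Y) :
  is_kernel (fun (_ : X) y => if y == y0 then 1 else 0 : R).
Proof.
split=> [_ y|_]; first by case: eqP.
by rewrite (bigD1 y0) //= eqxx big1 ?addr0 // => y /negbTE ->.
Qed.

Section PolicyVectors.
Variables (R : realType) (S A : finType).

Lemma lipschitz_rV_continuous_within n (f : 'rV[R]_n -> R) (D : set 'rV[R]_n) (L : R) :
  0 <= L ->
  (forall x y d, D x -> D y -> 0 <= d -> (forall i, `|x ord0 i - y ord0 i| <= d) ->
     `|f x - f y| <= L * d) ->
  {within D, continuous f}.
Proof.
move=> L_ge0 f_lip; apply/subspace_continuousP => x Dx.
apply/cvgrPdist_le => e e_gt0.
have L1_gt0 : 0 < L + 1 by rewrite ltr_wpDl.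
apply/nbhs_ballP; exists (e / (L + 1)); first by rewrite /= divr_gt0.
move=> y [_ xy] Dy /=.
apply: le_trans (f_lip x y (e / (L + 1)) Dx Dy _ _) _.
- by rewrite divr_ge0 // ltW.
- by move=> i; have := xy ord0 i; rewrite /ball /= => /ltW.
by rewrite mulrA ler_pdivrMr // mulrC ler_wpM2l ?ltW // ltrDl.
Qed.

Definition policy_of_rV (v : 'rV[R]_#|{: S * A}|) : S -> A -> R :=
  fun s a => v ord0 (enum_rank (s, a)).

Definition rV_of_policy (pi : S -> A -> R) : 'rV[R]_#|{: S * A}| :=
  \row_i pi (enum_val i).1 (enum_val i).2.

Lemma rV_of_policyK : cancel rV_of_policy policy_of_rV.
Proof.
by move=> pi; apply/funext => s; apply/funext => a; rewrite /policy_of_rV mxE enum_rankK.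
Qed.

Definition kernel_rV := [set v | is_kernel (policy_of_rV v)].

Lemma kernel_rVE : kernel_rV =
  (\bigcap_(i in setT) [set v | 0 <= v ord0 i]) `&`
  (\bigcap_(s in setT) [set v | \sum_a v ord0 (enum_rank (s, a)) = 1]).
Proof.
apply/seteqP; split => v.
  move=> [v_ge0 v_sum]; split => i _ /=; last exact: v_sum.
  have := v_ge0 (enum_val i).1 (enum_val i).2.
  by rewrite /policy_of_rV -surjective_pairing enum_valK.
by move=> [/= v_ge0 v_sum]; split => [s a|s]; [exact: v_ge0|exact: v_sum].
Qed.

Lemma kernel_rV_closed : closed kernel_rV.
Proof.
rewrite kernel_rVE; apply: closedI; apply: closed_bigI => s _.
  apply: (@preimage_closed _ _ (fun v : 'rV[R]__ => v ord0 s) [set x | 0 <= x]).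
    by move=> x _; exact: coord_continuous.
  exact: closed_ge.
have sum_cont : continuous (fun v : 'rV[R]_#|{: S * A}| => \sum_a v ord0 (enum_rank (s, a))).
  apply/continuous_subspace_setT.
  apply: (@lipschitz_rV_continuous_within _ _ _ #|A|%:R) => // x y d _ _ _ xy_d.
  rewrite -sumrB; apply: le_trans (ler_norm_sum _ _ _) _.
  apply: (@le_trans _ _ (\sum_(a : A) d)); first by apply: ler_sum.
  by rewrite sumr_const mulr_natl.
apply: (@preimage_closed _ _ _ [set x : R | x = 1]); last exact: closed_eq.
by move=> x _; exact: sum_cont.
Qed.

Lemma kernel_rV_compact : compact kernel_rV.
Proof.
apply: (@subclosed_compact _ _
  [set v : 'rV[R]_#|{: S * A}| | forall i, `[0, 1]%classic (v ord0 i)]).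
- exact: kernel_rV_closed.
- by apply: (@rV_compact R _ (fun=> `[0, 1]%classic)) => i; exact: segment_compact.
rewrite kernel_rVE => v [/= v_ge0 v_sum] i.
rewrite /= in_itv /= v_ge0 //= -(v_sum (enum_val i).1 I) (bigD1 (enum_val i).2) //=.
by rewrite -surjective_pairing enum_valK lerDl sumr_ge0 // => a _; apply: v_ge0.
Qed.

End PolicyVectors.

Section POMDP.
Variables (R : realType) (W S A : finType).
Variables (alpha : (W * A)%type -> W -> R) (beta : W -> S -> R)
          (rew : W -> A -> R) (gamma : R).

Let widen0 n : widen_ord (leqnSn n.+1) (ord0 : 'I_n.+1) = ord0.
Proof. exact: val_inj. Qed.

Let widenS n (t : 'I_n) :
  widen_ord (leqnSn n.+1) (lift ord0 t) = lift ord0 (widen_ord (leqnSn n) t).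
Proof. exact: val_inj. Qed.

Lemma traj_prob_fcons (nu : W -> R) pi T w0 s0 a0 (ws : {ffun 'I_T.+1 -> W}) ss as_ :
  traj_prob alpha beta nu pi (fcons w0 ws) (fcons s0 ss) (fcons a0 as_) =
  nu w0 * (beta w0 s0 * pi s0 a0) * traj_prob alpha beta (alpha (w0, a0)) pi ws ss as_.
Proof.
rewrite /traj_prob big_ord_recl widen0 !fcons0 fconsS.
by under eq_bigr => t _ do rewrite widenS !fconsS; rewrite !mulrA.
Qed.

Lemma traj_return_fcons T w0 a0 (ws : {ffun 'I_T.+1 -> W}) as_ :
  traj_return rew gamma (fcons w0 ws) (fcons a0 as_) =
  rew w0 a0 + gamma * traj_return rew gamma ws as_.
Proof.
rewrite /traj_return big_ord_recl widen0 !fcons0 expr0 mul1r mulr_sumr; congr (_ + _).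
by apply: eq_bigr => t _; rewrite widenS !fconsS exprS mulrA.
Qed.

Lemma sum_traj_fcons T
    (G : {ffun 'I_T.+2 -> W} -> {ffun 'I_T.+1 -> S} -> {ffun 'I_T.+1 -> A} -> R) :
  \sum_ws \sum_ss \sum_as_ G ws ss as_ =
  \sum_w0 \sum_s0 \sum_a0 \sum_ws \sum_ss \sum_as_
    G (fcons w0 ws) (fcons s0 ss) (fcons a0 as_).
Proof.
rewrite sum_ffunS; apply: eq_bigr => w0 _.
under eq_bigr => ws _ do (rewrite sum_ffunS; under eq_bigr => s0 _ do
   (under eq_bigr => ss _ do rewrite sum_ffunS)).
rewrite exchange_big; apply: eq_bigr => s0 _.
under eq_bigr => ws _ do rewrite exchange_big.
by rewrite exchange_big.
Qed.

Hypotheses (kalpha : is_kernel alpha) (kbeta : is_kernel beta).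

Lemma sum_traj_prob (pi : S -> A -> R) T (nu : W -> R) : is_kernel pi ->
  \sum_(ws : {ffun 'I_T.+1 -> W}) \sum_(ss : {ffun 'I_T -> S}) \sum_(as_ : {ffun 'I_T -> A})
     traj_prob alpha beta nu pi ws ss as_ = \sum_w nu w.
Proof.
move=> kpi; elim: T nu => [|T IH] nu.
  rewrite sum_ffunS; apply: eq_bigr => w0 _.
  rewrite (sum_ffun0 _ [ffun i : 'I_0 => w0]) /traj_prob.
  under eq_bigr => ss _ do under eq_bigr => as_ _ do rewrite big_ord0 mulr1 fcons0.
  by rewrite !sumr_const !card_ffun !card_ord !expn0 !mulr1n.
rewrite sum_traj_fcons; apply: eq_bigr => w0 _.
transitivity (\sum_s0 \sum_a0 nu w0 * (beta w0 s0 * pi s0 a0) *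
    \sum_(ws : {ffun 'I_T.+1 -> W}) \sum_ss \sum_as_
      traj_prob alpha beta (alpha (w0, a0)) pi ws ss as_).
  apply: eq_bigr => s0 _; apply: eq_bigr => a0 _; rewrite -sum3_mulr.
  by do 3![apply: eq_bigr => ? _]; rewrite traj_prob_fcons.
under eq_bigr => s0 _ do under eq_bigr => a0 _ do rewrite IH (proj2 kalpha) mulr1.
under eq_bigr => s0 _ do rewrite -mulr_sumr -mulr_sumr (proj2 kpi) mulr1.
by rewrite -mulr_sumr (proj2 kbeta) mulr1.
Qed.

Definition bellman (pi : S -> A -> R) (V : W -> R) (w : W) : R :=
  \sum_s beta w s * \sum_a pi s a * (rew w a + gamma * \sum_w' alpha (w, a) w' * V w').

Definition horizon_value pi T := iter T (bellman pi) (fun _ => 0).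

Lemma finite_horizon_valueE (pi : S -> A -> R) T (nu : W -> R) : is_kernel pi ->
  finite_horizon_value alpha beta rew gamma nu pi T = \sum_w nu w * horizon_value pi T w.
Proof.
move=> kpi; elim: T nu => [|T IH] nu.
  rewrite /finite_horizon_value big1 => [|ws _]; first by rewrite big1 // => w _; rewrite mulr0.
  by do 2![apply: big1 => ? _]; rewrite /traj_return big_ord0 mulr0.
rewrite /finite_horizon_value sum_traj_fcons; apply: eq_bigr => w0 _.
rewrite [horizon_value pi T.+1 w0]/= -/(horizon_value pi T) /bellman mulr_sumr.
apply: eq_bigr => s0 _; rewrite mulr_sumr mulr_sumr; apply: eq_bigr => a0 _.
pose P (ws : {ffun 'I_T.+1 -> W}) ss as_ := traj_prob alpha beta (alpha (w0, a0)) pi ws ss as_.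
transitivity (\sum_ws \sum_ss \sum_as_
    (nu w0 * (beta w0 s0 * pi s0 a0) * rew w0 a0 * P ws ss as_ +
     nu w0 * (beta w0 s0 * pi s0 a0) * gamma * (P ws ss as_ * traj_return rew gamma ws as_))).
  by do 3![apply: eq_bigr => ? _]; rewrite traj_prob_fcons traj_return_fcons /P; ring.
rewrite sum3_lincomb sum_traj_prob // (proj2 kalpha) mulr1.
rewrite -/(finite_horizon_value alpha beta rew gamma (alpha (w0, a0)) pi T) IH.
by rewrite mulrDr !mulrA mulrDr !mulrA.
Qed.

Definition rew_bound := \sum_w \sum_a `|rew w a|.
Definition value_bound := rew_bound / (1 - gamma).

Lemma rew_bound_ge0 : 0 <= rew_bound.
Proof. by do 2![apply: sumr_ge0 => ? _]. Qed.

Lemma norm_rew_le w a : `|rew w a| <= rew_bound.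
Proof.
rewrite /rew_bound (bigD1 w) //= (bigD1 a) //= -addrA lerDl.
by rewrite addr_ge0 ?sumr_ge0 // => ? _; apply: sumr_ge0.
Qed.

Hypotheses (gamma_ge0 : 0 <= gamma) (gamma_lt1 : gamma < 1).

Lemma value_bound_ge0 : 0 <= value_bound.
Proof. by rewrite divr_ge0 ?rew_bound_ge0 // subr_ge0 ltW. Qed.

Lemma rew_bound_fix : rew_bound + gamma * value_bound = value_bound.
Proof.
have gamma1_neq0 : 1 - gamma != 0 by rewrite subr_eq0 eq_sym lt_eqF.
by rewrite /value_bound; field.
Qed.

Lemma norm_kernel_avg_le (x : W -> R) c w a : (forall w, `|x w| <= c) ->
  `|\sum_w' alpha (w, a) w' * x w'| <= c.
Proof. by apply: norm_convex_le; [exact: (proj1 kalpha)|exact: (proj2 kalpha)]. Qed.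

Lemma norm_qvalue_le (x : W -> R) w a : (forall w, `|x w| <= value_bound) ->
  `|rew w a + gamma * \sum_w' alpha (w, a) w' * x w'| <= value_bound.
Proof.
move=> x_le; rewrite -rew_bound_fix; apply: le_trans (ler_normD _ _) _.
rewrite lerD ?norm_rew_le // normrM ger0_norm // ler_wpM2l //.
exact: norm_kernel_avg_le.
Qed.

Section FixedPolicy.
Variable pi : S -> A -> R.
Hypothesis kpi : is_kernel pi.

Lemma norm_bellman_avg_le (F : S -> A -> R) c w : (forall s a, `|F s a| <= c) ->
  `|\sum_s beta w s * \sum_a pi s a * F s a| <= c.
Proof.
move=> F_le; apply: norm_convex_le; [exact: (proj1 kbeta)|exact: (proj2 kbeta)|] => s.
by apply: norm_convex_le; [exact: (proj1 kpi)|exact: (proj2 kpi)|].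
Qed.

Lemma norm_bellman_le (V : W -> R) : (forall w, `|V w| <= value_bound) ->
  forall w, `|bellman pi V w| <= value_bound.
Proof. by move=> V_le w; apply: norm_bellman_avg_le => s a; exact: norm_qvalue_le. Qed.

Lemma bellman_contraction (V1 V2 : W -> R) c : (forall w, `|V1 w - V2 w| <= c) ->
  forall w, `|bellman pi V1 w - bellman pi V2 w| <= gamma * c.
Proof.
move=> V12 w.
have -> : bellman pi V1 w - bellman pi V2 w = \sum_s beta w s *
    \sum_a pi s a * (gamma * \sum_w' alpha (w, a) w' * (V1 w' - V2 w')).
  rewrite /bellman -sumrB; apply: eq_bigr => s _; rewrite -mulrBr -sumrB; congr (_ * _).
  apply: eq_bigr => a _; rewrite -mulrBr; congr (_ * _).
  rewrite opprD addrACA subrr add0r -mulrBr -sumrB; congr (_ * _).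
  by apply: eq_bigr => w' _; rewrite mulrBr.
apply: norm_bellman_avg_le => s a.
by rewrite normrM ger0_norm // ler_wpM2l // norm_kernel_avg_le.
Qed.

Lemma bellman_monotone (V1 V2 : W -> R) : (forall w, V1 w <= V2 w) ->
  forall w, bellman pi V1 w <= bellman pi V2 w.
Proof.
move=> V12 w; apply: ler_sum => s _; rewrite ler_wpM2l ?(proj1 kbeta) //.
apply: ler_sum => a _; rewrite ler_wpM2l ?(proj1 kpi) // lerD2l ler_wpM2l //.
by apply: ler_sum => w' _; rewrite ler_wpM2l ?(proj1 kalpha).
Qed.

Lemma iter_bellman_contraction (V1 V2 : W -> R) c : (forall w, `|V1 w - V2 w| <= c) ->
  forall n w, `|iter n (bellman pi) V1 w - iter n (bellman pi) V2 w| <= gamma ^+ n * c.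
Proof.
move=> V12; elim=> [|n IH] w /=; first by rewrite expr0 mul1r.
by rewrite exprS -mulrA; apply: bellman_contraction.
Qed.

Lemma norm_horizon_value_le T w : `|horizon_value pi T w| <= value_bound.
Proof.
elim: T w => [|T IH] w /=; first by rewrite normr0 value_bound_ge0.
exact: norm_bellman_le.
Qed.

Lemma horizon_value_cauchy n m w : (n <= m)%N ->
  `|horizon_value pi m w - horizon_value pi n w| <= gamma ^+ n * value_bound.
Proof.
move=> le_nm; rewrite /horizon_value -(subnKC le_nm) iterD.
by apply: iter_bellman_contraction => w'; rewrite subr0 norm_horizon_value_le.
Qed.

Definition value w := limn (horizon_value pi ^~ w).

Lemma horizon_value_rate n w :
  `|horizon_value pi n w - value w| <= gamma ^+ n * value_bound.
Proof. by apply: cauchy_expr_limn => // k m; exact: horizon_value_cauchy. Qed.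

Lemma norm_value_le w : `|value w| <= value_bound.
Proof.
apply: (le_expr_slack gamma_ge0 gamma_lt1 (c := value_bound)) => n.
rewrite -[value w](subrK (horizon_value pi n w)) addrC.
apply: le_trans (ler_normD _ _) _.
by rewrite lerD ?norm_horizon_value_le // distrC horizon_value_rate.
Qed.

Lemma bellman_value w : bellman pi value w = value w.
Proof.
have le_exprS n : gamma ^+ n.+1 * value_bound <= gamma ^+ n * value_bound.
  by rewrite ler_wpM2r ?value_bound_ge0 // exprSr ler_piMr ?exprn_ge0 // ltW.
apply/eqP; rewrite -subr_eq0 -normr_le0.
apply: (le_expr_slack gamma_ge0 gamma_lt1 (c := value_bound + value_bound)) => n.
rewrite add0r -(subrK (horizon_value pi n.+1 w) (bellman _ _ _)) -addrA.
apply: le_trans (ler_normD _ _) _; rewrite mulrDr lerD //.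
  rewrite [horizon_value pi n.+1 w]/= -/(horizon_value pi n).
  apply: le_trans (le_exprS n); rewrite exprS -mulrA.
  by apply: bellman_contraction => w'; rewrite distrC horizon_value_rate.
exact: le_trans (horizon_value_rate n.+1 w) (le_exprS n).
Qed.

Lemma discounted_rewardE (mu : W -> R) : is_dist mu ->
  discounted_reward alpha beta rew gamma mu pi = \sum_w mu w * value w.
Proof.
move=> [mu_ge0 mu_sum]; apply: (limn_expr_rate gamma_ge0 gamma_lt1 (K := value_bound)) => n.
rewrite finite_horizon_valueE // -sumrB.
under eq_bigr => w _ do rewrite -mulrBr.
by apply: norm_convex_le => // w; exact: horizon_value_rate.
Qed.

End FixedPolicy.

Lemma value_le_of_bellman (pi pi' : S -> A -> R) : is_kernel pi -> is_kernel pi' ->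
  (forall w, value pi w <= bellman pi' (value pi) w) -> forall w, value pi w <= value pi' w.
Proof.
move=> kpi kpi' le_V w.
have le_iter n w' : value pi w' <= iter n (bellman pi') (value pi) w'.
  elim: n w' => [|n IH] w' //=.
  exact: le_trans (le_V w') (bellman_monotone kpi' IH w').
apply: (le_expr_slack gamma_ge0 gamma_lt1 (c := value_bound + value_bound)) => n.
apply: le_trans (le_iter n w) _; rewrite -lerBlDl.
apply: le_trans (ler_norm _) _.
apply: le_trans (ler_distD (horizon_value pi' n w) _ _) _.
rewrite mulrDr lerD ?horizon_value_rate //.
by apply: iter_bellman_contraction => // w'; rewrite subr0 norm_value_le.
Qed.

Definition value_lip := #|A|%:R * value_bound / (1 - gamma).

Lemma value_lip_ge0 : 0 <= value_lip.
Proof.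
by rewrite divr_ge0 ?subr_ge0 ?(ltW gamma_lt1) // mulr_ge0 ?value_bound_ge0.
Qed.

Lemma value_lip_fix d : #|A|%:R * value_bound * d + gamma * (value_lip * d) = value_lip * d.
Proof.
have gamma1_neq0 : 1 - gamma != 0 by rewrite subr_eq0 eq_sym lt_eqF.
by rewrite /value_lip; field.
Qed.

Lemma bellman_policy_lipschitz (pi pi' : S -> A -> R) (V : W -> R) d w :
  (forall s a, `|pi s a - pi' s a| <= d) -> (forall w, `|V w| <= value_bound) ->
  `|bellman pi V w - bellman pi' V w| <= #|A|%:R * value_bound * d.
Proof.
move=> pi_d V_le.
have -> : bellman pi V w - bellman pi' V w = \sum_s beta w s * \sum_a (pi s a - pi' s a) *
    (rew w a + gamma * \sum_w' alpha (w, a) w' * V w').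
  rewrite /bellman -sumrB; apply: eq_bigr => s _; rewrite -mulrBr -sumrB; congr (_ * _).
  by apply: eq_bigr => a _; rewrite -mulrBl.
apply: norm_convex_le; [exact: (proj1 kbeta)|exact: (proj2 kbeta)|] => s.
apply: le_trans (ler_norm_sum _ _ _) _.
apply: (@le_trans _ _ (\sum_(a : A) value_bound * d)).
  by apply: ler_sum => a _; rewrite normrM mulrC ler_pM ?norm_qvalue_le.
by rewrite sumr_const mulr_natl mulrnAl.
Qed.

Lemma value_lipschitz (pi pi' : S -> A -> R) d : is_kernel pi -> is_kernel pi' ->
  0 <= d -> (forall s a, `|pi s a - pi' s a| <= d) ->
  forall w, `|value pi w - value pi' w| <= value_lip * d.
Proof.
move=> kpi kpi' d_ge0 pi_d.
have horizon_lip n w : `|horizon_value pi n w - horizon_value pi' n w| <= value_lip * d.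
  elim: n w => [|n IH] w /=; first by rewrite subrr normr0 mulr_ge0 ?value_lip_ge0.
  rewrite -value_lip_fix -(subrK (bellman pi' (horizon_value pi n) w) (bellman _ _ _)) -addrA.
  apply: le_trans (ler_normD _ _) _; rewrite lerD ?bellman_contraction //.
  by apply: bellman_policy_lipschitz => // w'; exact: norm_horizon_value_le.
move=> w; apply: (le_expr_slack gamma_ge0 gamma_lt1 (c := value_bound + value_bound)) => n.
have -> : value pi w - value pi' w = (horizon_value pi n w - horizon_value pi' n w) +
    ((value pi w - horizon_value pi n w) + (horizon_value pi' n w - value pi' w)) by ring.
apply: le_trans (ler_normD _ _) _; rewrite mulrDr lerD //.
apply: le_trans (ler_normD _ _) _.
by rewrite lerD ?horizon_value_rate // distrC horizon_value_rate.
Qed.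

Lemma discounted_reward_lipschitz (pi pi' : S -> A -> R) (mu : W -> R) d :
  is_kernel pi -> is_kernel pi' -> is_dist mu -> 0 <= d ->
  (forall s a, `|pi s a - pi' s a| <= d) ->
  `|discounted_reward alpha beta rew gamma mu pi -
    discounted_reward alpha beta rew gamma mu pi'| <= value_lip * d.
Proof.
move=> kpi kpi' [mu_ge0 mu_sum] d_ge0 pi_d.
rewrite !discounted_rewardE // -sumrB; under eq_bigr => w _ do rewrite -mulrBr.
by apply: norm_convex_le => // w; exact: value_lipschitz.
Qed.

Lemma discounted_reward_monotone (pi pi' : S -> A -> R) (mu : W -> R) :
  is_kernel pi -> is_kernel pi' -> is_dist mu -> (forall w, value pi w <= value pi' w) ->
  discounted_reward alpha beta rew gamma mu pi <= discounted_reward alpha beta rew gamma mu pi'.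
Proof.
move=> kpi kpi' mu_dist le_V; rewrite !discounted_rewardE //.
by apply: ler_sum => w _; rewrite ler_wpM2l ?le_V ?(proj1 mu_dist).
Qed.

Definition qvalue pi w a := rew w a + gamma * \sum_w' alpha (w, a) w' * value pi w'.

Definition set_point_mass (pi : S -> A -> R) (s0 : S) (a0 : A) : S -> A -> R :=
  fun s a => if s == s0 then (if a == a0 then 1 else 0) else pi s a.

Lemma sum_point_mass (F : A -> R) a0 : \sum_a (if a == a0 then 1 else 0) * F a = F a0.
Proof.
rewrite (bigD1 a0) //= eqxx mul1r big1 ?addr0 // => a /negbTE ->.
by rewrite mul0r.
Qed.

Lemma set_point_mass_kernel pi s0 a0 : is_kernel pi -> is_kernel (set_point_mass pi s0 a0).
Proof.
move=> [pi_ge0 pi_sum]; have [pm_ge0 pm_sum] := @point_mass_kernel R S A a0.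
split=> [s a|s]; rewrite /set_point_mass; case: eqP => // _.
- exact: pm_ge0 s a.
- exact: pm_sum s.
Qed.

Lemma improve_at (pi : S -> A -> R) (s0 : S) (a0 : A) :
  is_kernel pi -> (supp_size beta s0 <= 1)%N ->
  exists pi' : S -> A -> R, [/\ is_kernel pi', (forall s, s != s0 -> pi' s = pi s),
    deterministic_at pi' s0 & forall w, value pi w <= value pi' w].
Proof.
move=> kpi supp1.
(* All worlds that can emit s0 coincide, so a single action maximizes their Q-values. *)
pose astar := if [pick w | 0 < beta w s0] is Some w
  then [arg max_(a > a0) qvalue pi w a]%O else a0.
have kpi' := set_point_mass_kernel s0 astar kpi.
exists (set_point_mass pi s0 astar); split => //.
- by move=> s /negbTE s_neq; rewrite /set_point_mass s_neq.
- by exists astar => a; rewrite /set_point_mass eqxx.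
apply: value_le_of_bellman => // w.
rewrite -{1}(bellman_value kpi); apply: ler_sum => s _.
rewrite /set_point_mass; case: eqP => [->|//].
rewrite sum_point_mass; have [->|beta_neq0] := eqVneq (beta w s0) 0; first by rewrite !mul0r.
have beta_gt0 : 0 < beta w s0 by rewrite lt_neqAle eq_sym beta_neq0 (proj1 kbeta).
rewrite ler_wpM2l ?(proj1 kbeta) //.
have -> : astar = [arg max_(a > a0) qvalue pi w a]%O.
  rewrite /astar; case: pickP => [w' beta'_gt0|/(_ w)]; last by rewrite beta_gt0.
  by rewrite (supp_size_le1_eq supp1 beta'_gt0 beta_gt0).
exact: avg_le_arg_max (proj1 kpi s0) (proj2 kpi s0).
Qed.

Lemma improve_deterministic (pi : S -> A -> R) (a0 : A) : is_kernel pi ->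
  exists pi' : S -> A -> R, [/\ is_kernel pi',
    (forall s, (supp_size beta s <= 1)%N -> deterministic_at pi' s) &
    forall w, value pi w <= value pi' w].
Proof.
move=> kpi.
suff [pi' [kpi' det_pi' le_V]] : exists pi' : S -> A -> R, [/\ is_kernel pi',
    (forall s, s \in enum S -> (supp_size beta s <= 1)%N -> deterministic_at pi' s) &
    forall w, value pi w <= value pi' w].
  by exists pi'; split => // s; apply: det_pi'; rewrite mem_enum.
elim: (enum S) => [|s l [pi1 [kpi1 det_pi1 le_V1]]]; first by exists pi.
have [supp1|supp_gt1] := leqP (supp_size beta s) 1; last first.
  exists pi1; split => // s'; rewrite inE => /predU1P[-> |/det_pi1//].
  by rewrite leqNgt supp_gt1.
have [pi2 [kpi2 pi2_eq det_pi2 le_V2]] := improve_at a0 kpi1 supp1.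
exists pi2; split => // [s'|w]; last exact: le_trans (le_V1 w) (le_V2 w).
have [-> //|s'_neq] := eqVneq s' s.
rewrite inE (negbTE s'_neq) => s'_l supp1'.
have [a pi1_s'] := det_pi1 s' s'_l supp1'.
by exists a => a'; rewrite pi2_eq.
Qed.

Lemma exists_optimal_policy (a0 : A) (mu : W -> R) : is_dist mu ->
  exists2 pi0 : S -> A -> R, is_kernel pi0 & forall pi, is_kernel pi ->
    discounted_reward alpha beta rew gamma mu pi <= discounted_reward alpha beta rew gamma mu pi0.
Proof.
move=> mu_dist.
pose f v := discounted_reward alpha beta rew gamma mu (policy_of_rV v).
have [v kv v_max] : exists2 v, v \in @kernel_rV R S A &
    forall t, t \in @kernel_rV R S A -> f t <= f v.
  apply: EVT_max_rV.
  - exists (rV_of_policy (fun _ a => if a == a0 then 1 else 0)).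
    by rewrite /kernel_rV /= rV_of_policyK; exact: point_mass_kernel.
  - exact: kernel_rV_compact.
  apply: (lipschitz_rV_continuous_within value_lip_ge0) => x y d kx ky d_ge0 xy_d.
  by apply: discounted_reward_lipschitz => // s a; exact: xy_d.
exists (policy_of_rV v); first by move: kv; rewrite inE.
move=> pi kpi; rewrite -(rV_of_policyK pi); apply: v_max.
by rewrite inE /kernel_rV /= rV_of_policyK.
Qed.

End POMDP.

Theorem theorem8 (R : realType) (W S A : finType) (a0 : A)
    (alpha : (W * A)%type -> W -> R) (beta : W -> S -> R) (rew : W -> A -> R)
    (gamma : R) (mu : W -> R) :
  is_kernel alpha -> is_kernel beta -> 0 < gamma < 1 -> is_dist mu ->
  exists pistar : S -> A -> R,
    is_kernel pistar /\
    (forall s : S, (supp_size beta s <= 1)%N -> deterministic_at pistar s) /\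
    (forall pi : S -> A -> R, is_kernel pi ->
       discounted_reward alpha beta rew gamma mu pistar >=
       discounted_reward alpha beta rew gamma mu pi).
Proof.
move=> kalpha kbeta /andP[gamma_gt0 gamma_lt1] mu_dist.
have gamma_ge0 := ltW gamma_gt0.
have [pi0 kpi0 pi0_opt] :=
  exists_optimal_policy rew kalpha kbeta gamma_ge0 gamma_lt1 a0 mu_dist.
have [pistar [kpistar det_pistar le_V]] :=
  improve_deterministic rew kalpha kbeta gamma_ge0 gamma_lt1 a0 kpi0.
exists pistar; split=> //; split=> // pi kpi.
apply: le_trans (pi0_opt pi kpi) _.
exact: discounted_reward_monotone.
Qed.
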